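(* For every field $\mathbb{F}$, all $n,d\ge1$ and every $n^d\times n^d$ matrix $M$ over $\mathbb{F}$, \[ \mathcal L_{\mathsf{nc,sm}}\big(\mathrm{ShiftedTensor}(M)\big)\ \ge\ \frac{\mathrm{PT\text{-}rank}(M)}{n^{\,d-\log_2 d+1}}. \]
   Context: Non-commutative set-multilinear formula size of a tensor $A:[N]^k\to\mathbb{F}$: if $k=1$, $\mathcal L_{\mathsf{nc,sm}}(A)$ is $1$ if $A\ne0$ and $0$ otherwise; if $k\ge2$ it is the minimum of $\sum_i(\mathcal L_{\mathsf{nc,sm}}(B_i)+\mathcal L_{\mathsf{nc,sm}}(C_i))$ over finite families $(e_i,f_i,B_i,C_i)$ with positive integers $e_i+f_i=k$, $B_i:[N]^{e_i}\to\mathbb{F}$, $C_i:[N]^{f_i}\to\mathbb{F}$, $A=\sum_iB_i\otimes C_i$ (where $(B\otimes C)(x,y)=B(x)C(y)$, concatenating coordinates in order). Pairing $\langle i,j\rangle=(i-1)n+j$. $\mathrm{ShiftedTensor}(M):[n^2]^{d+1}\to\mathbb{F}$, $\mathrm{ShiftedTensor}(M)(\langle p,i_1\rangle,\langle j_1,i_2\rangle,\dots,\langle j_{d-1},i_d\rangle,\langle j_d,q\rangle)=\mathbb 1\{p=q=1\}M_{(i_1,\dots,i_d),(j_1,\dots,j_d)}$. Partial transposes: for $k\in[d]$, $M^{\top_k}$ swaps the $k$-th row index with the $k$-th column index; $M^{\top_\kappa}$ composes these over $k\in\kappa\subseteq[d]$. $M$ is PT-basic if $\mathrm{rank}(M^{\top_\kappa})=1$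 for some $\kappa$; $\mathrm{PT\text{-}rank}(M)$ is the least number of PT-basic matrices summing to $M$. Logs base 2. *)

From HB Require Import structures.
From mathcomp Require Import all_boot all_order all_algebra.
From mathcomp Require Import boolp.
From mathcomp Require Import reals exp.
Set Implicit Arguments. Unset Strict Implicit. Unset Printing Implicit Defensive.
Import Order.TTheory GRing.Theory Num.Theory.
Local Open Scope ring_scope.

Lemma minNat_ex (P : nat -> Prop) :
  (exists n, P n) -> exists n, `[< P n >].
Proof. by case=> n Pn; exists n; apply/asboolP. Qed.

(* the least n with P n (P is always inhabited where we use it;
   the default 0 in the other branch is never reached) *)
Definition minNat (P : nat -> Prop) : nat :=
  match pselect (exists n, P n) with
  | left H => ex_minn (minNat_ex H)
  | right _ => 0%N
  end.

(* A tensor [N]^k -> F is represented by a function on sequences over 'I_N;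
   only its values on sequences of size k matter.  Coordinates are 0-indexed. *)
Definition tensor (F : fieldType) (N : nat) := seq 'I_N -> F.

(* SMle k A s  <->  L_{nc,sm}(A) <= s  for the order-k tensor A,
   following the recursive definition of L_{nc,sm}:
   - k = 1 : L(A) = 1 if A <> 0, 0 otherwise;
   - k >= 2 : min over finite families (e_i,f_i,B_i,C_i), e_i+f_i = k, e_i,f_i >= 1,
              A = sum_i B_i (x) C_i, of sum_i (L(B_i) + L(C_i)). *)
Inductive SMle (F : fieldType) (N : nat) : nat -> tensor F N -> nat -> Prop :=
| SMle_zero1 (A : tensor F N) (s : nat) :
    (forall x, size x = 1%N -> A x = 0) -> SMle 1 A s
| SMle_one1 (A : tensor F N) (s : nat) :
    (1 <= s)%N -> SMle 1 A s
| SMle_split (k : nat) (A : tensor F N) (s m : nat) (e : 'I_m -> nat)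
    (B C : 'I_m -> tensor F N) (sB sC : 'I_m -> nat) :
    (2 <= k)%N ->
    (forall i, 0 < e i < k)%N ->
    (forall i, SMle (e i) (B i) (sB i)) ->
    (forall i, SMle (k - e i) (C i) (sC i)) ->
    (\sum_(i < m) (sB i + sC i) <= s)%N ->
    (forall x, size x = k ->
       A x = \sum_(i < m) B i (take (e i) x) * C i (drop (e i) x)) ->
    SMle k A s.

Definition Lncsm (F : fieldType) (N k : nat) (A : tensor F N) : nat :=
  minNat (fun s => SMle k A s).

(* entry of a matrix at natural-number indices (0 outside the range) *)
Definition Mnat (F : fieldType) (m : nat) (M : 'M[F]_m) (r c : nat) : F :=
  match insub r, insub c with
  | Some r', Some c' => M r' c'
  | _, _ => 0
  end.

Definition enc (n d : nat) (f : 'I_d -> nat) : nat :=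
  (\sum_(k < d) f k * n ^ (d.-1 - k))%N.

(* k-th digit (0-indexed, most significant first) of an index in [n^d] *)
Definition digit (n d : nat) (i : nat) (k : 'I_d) : nat :=
  ((i %/ n ^ (d.-1 - k)) %% n)%N.

Definition Mtup (F : fieldType) (n d : nat) (M : 'M[F]_(n ^ d))
  (i j : 'I_d -> nat) : F := Mnat M (enc n i) (enc n j).

(* pairing <i,j> = i*n + j (0-indexed); left and right components of x in [n^2] *)
Definition pfst (n : nat) (x : nat) : nat := (x %/ n)%N.
Definition psnd (n : nat) (x : nat) : nat := (x %% n)%N.

(* ShiftedTensor(M)(<p,i_1>,<j_1,i_2>,...,<j_{d-1},i_d>,<j_d,q>)
     = 1{p = q = first index} * M_{(i_1..i_d),(j_1..j_d)} ,  order d+1 over [n^2] *)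
Definition ShiftedTensor (F : fieldType) (n d : nat) (M : 'M[F]_(n ^ d)) :
  tensor F (n ^ 2) :=
  fun x =>
    let y t := nth 0%N (map (@nat_of_ord _) x) t in
    if (pfst n (y 0%N) == 0%N) && (psnd n (y d) == 0%N) then
      Mtup M (fun k : 'I_d => psnd n (y k)) (fun k : 'I_d => pfst n (y k.+1))
    else 0.

(* M^{T_kappa}: for k in kappa swap the k-th row index with the k-th column index *)
Definition ptrans (F : fieldType) (n d : nat) (kappa : {set 'I_d})
  (M : 'M[F]_(n ^ d)) : 'M[F]_(n ^ d) :=
  \matrix_(r, c)
    Mtup M (fun k => if k \in kappa then digit n c k else digit n r k)
           (fun k => if k \in kappa then digit n r k else digit n c k).

Definition PTbasic (F : fieldType) (n d : nat) (M : 'M[F]_(n ^ d)) : Prop :=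
  exists kappa : {set 'I_d}, \rank (ptrans kappa M) = 1%N.

Definition PTrank (F : fieldType) (n d : nat) (M : 'M[F]_(n ^ d)) : nat :=
  minNat (fun r => exists B : 'I_r -> 'M[F]_(n ^ d),
             (forall i, PTbasic (B i)) /\ M = \sum_(i < r) B i).

Definition log2 (R : realType) (x : R) : R := ln x / ln 2.

(* A formula of size s for an order-k tensor expands into at most s products
   T_1 ⊗ ... ⊗ T_r of tensors of positive orders, and by always recursing into
   the larger of the two factors of a split every product gets r >= log2 k blocks.
   Apply this to ShiftedTensor(M), k = d + 1, and colour the d + 1 positions
   alternately block by block.  The digits i_k and j_k sit at positions k and
   k + 1, so they fall into different colour classes unless both positions lie
   in one block, which happens for d + 1 - r indices k.  Summing over the values
   of j_k at those indices writes the product as n^(d+1-r) matrices, each a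
   product of a colour-false and a colour-true factor, hence of rank one after
   the partial transpose at the positions of colour true.  Altogether
   PT-rank(M) <= s n^(d+1-log2 d). *)

From HB Require Import structures.
From mathcomp Require Import all_boot all_order all_algebra.
From mathcomp Require Import boolp reals exp.
From mathcomp Require Import zify ring lra.
From Stdlib Require List.
Import Order.TTheory GRing.Theory Num.Theory.
Local Open Scope ring_scope.
Set Implicit Arguments. Unset Strict Implicit. Unset Printing Implicit Defensive.

Lemma minNatP (P : nat -> Prop) : (exists n, P n) ->
  P (minNat P) /\ forall m, P m -> (minNat P <= m)%N.
Proof.
move=> exP; rewrite /minNat; case: pselect => // exP'.
case: ex_minnP => m /asboolP Pm min_m; split=> // m' Pm'; exact/min_m/asboolP.
Qed.

Lemma eq_big_In (R : Type) (idx : R) (op : R -> R -> R) (I : Type) (r : seq I)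
    (F1 F2 : I -> R) :
  (forall i, List.In i r -> F1 i = F2 i) ->
  \big[op/idx]_(i <- r) F1 i = \big[op/idx]_(i <- r) F2 i.
Proof.
elim: r => [|i r IHr] eqF; first by rewrite !big_nil.
by rewrite !big_cons eqF /=; [rewrite IHr // => j rj; apply: eqF; right | left].
Qed.

(** * Block products and expansions of formulas *)

Section BlockProducts.
Variables (F : fieldType) (N : nat).
Local Notation tens := (tensor F N).

Definition tmul (e : nat) (B C : tens) : tens := fun x => B (take e x) * C (drop e x).

(* [:: (l_1, T_1); ...; (l_r, T_r)] stands for T_1 ⊗ ... ⊗ T_r, T_i of order l_i. *)
Fixpoint block_prod (p : seq (nat * tens)) : tens :=
  if p is (l, T) :: p' then tmul l T (block_prod p') else fun=> 1.

Definition block_order (p : seq (nat * tens)) := sumn (map fst p).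

Definition pos_blocks (p : seq (nat * tens)) := all (fun l => 0 < l)%N (map fst p).

Lemma block_prod_rcons p l T x : size x = (block_order p + l)%N ->
  block_prod (rcons p (l, T)) x =
  block_prod p (take (block_order p) x) * T (drop (block_order p) x).
Proof.
elim: p x => [|[l' T'] p IHp] x /= szx.
  by rewrite /tmul /= mulr1 mul1r drop0 take_oversize ?szx.
rewrite /tmul IHp; last by rewrite size_drop szx /block_order /=; lia.
rewrite mulrA /block_order /= take_takel ?leq_addr // -/(block_order p).
by rewrite take_drop drop_drop addnC.
Qed.

Lemma size_le_block_order p : pos_blocks p -> (size p <= block_order p)%N.
Proof.
elim: p => [|[l T] p IHp] //= /andP[/= l_gt0 /IHp]; rewrite /block_order /=; lia.
Qed.

Definition admissible k (p : seq (nat * tens)) :=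
  [/\ block_order p = k, pos_blocks p & (k <= 2 ^ size p)%N].

Definition expansion k (A : tens) s (P : seq (seq (nat * tens))) :=
  [/\ (size P <= s)%N, forall p, List.In p P -> admissible k p &
      forall x, size x = k -> A x = \sum_(p <- P) block_prod p x].

Lemma expansion_rcons e f B C s P : (0 < f <= e)%N -> expansion e B s P ->
  expansion (e + f) (tmul e B C) s [seq rcons p (f, C) | p <- P].
Proof.
case/andP=> f_gt0 le_fe [szP admP eqB]; split; first by rewrite size_map.
  move=> _ /List.in_map_iff [p [<- /admP [ord_p pos_p le_ep]]]; split.
  - by rewrite /block_order map_rcons -cats1 sumn_cat -/(block_order p) ord_p /= addn0.
  - by rewrite /pos_blocks map_rcons all_rcons f_gt0.
  - by rewrite size_rcons expnS mul2n -addnn leq_add // (leq_trans le_fe).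
move=> x szx; rewrite /tmul eqB ?size_takel ?szx ?leq_addr // big_distrl big_map.
apply: eq_big_In => p /admP [ord_p _ _].
by rewrite block_prod_rcons ord_p ?szx // [take f _]take_oversize // size_drop szx addKn.
Qed.

Lemma expansion_cons e f B C s P : (0 < e < f)%N -> expansion f C s P ->
  expansion (e + f) (tmul e B C) s [seq (e, B) :: p | p <- P].
Proof.
case/andP=> e_gt0 lt_ef [szP admP eqC]; split; first by rewrite size_map.
  move=> _ /List.in_map_iff [p [<- /admP [ord_p pos_p le_fp]]]; split.
  - by rewrite /block_order /= -/(block_order p) ord_p.
  - by rewrite /pos_blocks /= e_gt0.
  - by rewrite /= expnS mul2n -addnn leq_add // ltnW // (leq_trans lt_ef).
move=> x szx; rewrite /tmul eqC ?size_drop ?szx ?addKn // big_distrr big_map.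
by apply: eq_bigr.
Qed.

Lemma expansion_tmul e f B C sB sC PB PC : (0 < e)%N -> (0 < f)%N ->
  expansion e B sB PB -> expansion f C sC PC ->
  exists P, expansion (e + f) (tmul e B C) (sB + sC) P.
Proof.
move=> e_gt0 f_gt0 expB expC; have [le_fe | lt_ef] := leqP f e.
  exists [seq rcons p (f, C) | p <- PB].
  have [szP admP eqA] := expansion_rcons C (introT andP (conj f_gt0 le_fe)) expB.
  by split=> //; rewrite (leq_trans szP) ?leq_addr.
exists [seq (e, B) :: p | p <- PC].
have [szP admP eqA] := expansion_cons B (introT andP (conj e_gt0 lt_ef)) expC.
by split=> //; rewrite (leq_trans szP) ?leq_addl.
Qed.

Lemma expansion_ext k A A' s s' P : (s <= s')%N ->
  (forall x, size x = k -> A x = A' x) -> expansion k A s P -> expansion k A' s' P.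
Proof.
move=> le_s eqA [szP admP eqP]; split=> [|//|x szx]; first exact: leq_trans le_s.
by rewrite -eqA ?eqP.
Qed.

Lemma expansion_sum (I : Type) (r : seq I) k (A : I -> tens) (s : I -> nat)
    (P : I -> seq (seq (nat * tens))) :
  (forall i, expansion k (A i) (s i) (P i)) ->
  expansion k (fun x => \sum_(i <- r) A i x) (\sum_(i <- r) s i)
    (\big[cat/[::]]_(i <- r) P i).
Proof.
move=> expP; elim: r => [|i r [szP admP eqA]].
  by split=> [||x _]; rewrite ?big_nil.
have [szPi admPi eqAi] := expP i; rewrite !big_cons; split.
- by rewrite size_cat leq_add.
- by move=> p /List.in_app_iff [/admPi | /admP].
- by move=> x szx; rewrite big_cons big_cat eqAi ?eqA.
Qed.

Lemma SMle_expansion k A s : SMle k A s -> exists P, expansion k A s P.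
Proof.
elim=> {k A s} [A s A0 | A s s_gt0 | k A s m e B C sB sC _ e_bounds _ IHB _ IHC le_s eqA].
- by exists [::]; split=> // x szx; rewrite big_nil A0.
- exists [:: [:: (1%N, A)]]; split=> //=; first by move=> p [<-|//]; split.
  by move=> x szx; rewrite big_seq1 /= /tmul mulr1 take_oversize ?szx.
have /choice [P expP] : forall i,
    exists P, expansion k (tmul (e i) (B i) (C i)) (sB i + sC i) P.
  move=> i; have [PB expB] := IHB i; have [PC expC] := IHC i.
  have /andP[e_gt0 lt_ek] := e_bounds i.
  rewrite -(subnKC (ltnW lt_ek)); apply: expansion_tmul expB expC => //.
  by rewrite subn_gt0.
exists (\big[cat/[::]]_(i < m) P i).
exact: expansion_ext le_s (fun x szx => esym (eqA x szx)) (expansion_sum _ expP).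
Qed.

Lemma SMle_exists k (A : tens) : (0 < k)%N -> exists s, SMle k A s.
Proof.
elim: k A => [//|[|k] IHk] A _; first by exists 1%N; apply: SMle_one1.
pose C (a : 'I_N) : tens := fun z => A (a :: z).
have /choice [sC SMle_C] : forall a, exists s, SMle k.+1 (C a) s by move=> a; apply: IHk.
pose B (a : 'I_N) : tens := fun y => (head a y == a)%:R.
exists (\sum_(a < N) (1 + sC a))%N.
apply: (@SMle_split F N k.+2 A _ N (fun=> 1%N) B C (fun=> 1%N) sC) => //.
  by move=> a; apply: SMle_one1.
case=> [//|a x] _ /=; rewrite take0 drop0 (bigD1 a) //= /B /= eqxx mul1r.
by rewrite big1 ?addr0 // => b /negbTE neq_ba; rewrite eq_sym neq_ba mul0r.
Qed.

Fixpoint colouring (b : bool) (p : seq (nat * tens)) : seq bool :=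
  if p is (l, _) :: p' then nseq l b ++ colouring (~~ b) p' else [::].

Fixpoint colour_prod (c b : bool) (p : seq (nat * tens)) (x : seq 'I_N) : F :=
  if p is (l, T) :: p' then
    (if b == c then T (take l x) else 1) * colour_prod c (~~ b) p' (drop l x)
  else 1.

Lemma size_colouring b p : size (colouring b p) = block_order p.
Proof. by elim: p b => [|[l T] p IHp] b //=; rewrite size_cat size_nseq IHp. Qed.

Lemma block_prod_colour b p x :
  block_prod p x = colour_prod b b p x * colour_prod (~~ b) b p x.
Proof.
elim: p b x => [|[l T] p IHp] b x /=; first by rewrite mulr1.
by rewrite /tmul (IHp (~~ b)) negbK; case: b => /=; ring.
Qed.

Lemma colour_prod_local c b p (x y : seq 'I_N) x0 :
  size x = block_order p -> size y = block_order p ->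
  (forall t, (t < block_order p)%N -> nth false (colouring b p) t = c ->
     nth x0 x t = nth x0 y t) ->
  colour_prod c b p x = colour_prod c b p y.
Proof.
elim: p b x y => [|[l T] p IHp] b x y //=; rewrite /block_order /= => szx szy eq_xy.
congr (_ * _).
  case: eqP => // bc; congr (T _); apply: (@eq_from_nth _ x0) => [|t].
    by rewrite !size_takel // ?szx ?szy leq_addr.
  rewrite size_takel ?szx ?leq_addr // => lt_tl; rewrite !nth_take //.
  by apply: eq_xy; [exact: ltn_addr | rewrite nth_cat size_nseq lt_tl nth_nseq lt_tl].
apply: IHp => [||t lt_t ct]; rewrite ?size_drop ?szx ?szy ?addKn //.
rewrite !nth_drop; apply: eq_xy; first by rewrite ltn_add2l.
by rewrite nth_cat size_nseq ltnNge leq_addr /= addKn.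
Qed.

Fixpoint adj_eq (s : seq bool) : nat :=
  if s is a :: s' then (if s' is b :: _ then (a == b) + adj_eq s' else 0) else 0.

Lemma adj_eq_sum s :
  adj_eq s = (\sum_(k < (size s).-1) (nth false s k == nth false s k.+1))%N.
Proof.
elim: s => [|a [|b s] IHs]; rewrite ?big_ord0 //.
by rewrite big_ord_recl -IHs.
Qed.

Lemma adj_eq_nseq_cat l b s : (0 < l)%N -> nilp s || (head b s == ~~ b) ->
  adj_eq (nseq l b ++ s) = (l.-1 + adj_eq s)%N.
Proof.
elim: l => [//|[|l] IHl] _ hs; last first.
  by transitivity ((b == b) + adj_eq (nseq l.+1 b ++ s))%N; rewrite // IHl // eqxx.
by case: s hs {IHl} => [|c s] //= /eqP ->; case: b.
Qed.

Lemma adj_eq_colouring b p : pos_blocks p ->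
  adj_eq (colouring b p) = (block_order p - size p)%N.
Proof.
elim: p b => [|[l T] p IHp] b //= /andP[/= l_gt0 pos_p].
rewrite adj_eq_nseq_cat // ?IHp //; last first.
  by case: p pos_p {IHp} => [|[[|l'] T'] p] //= _; rewrite eqxx orbT.
have := size_le_block_order pos_p; rewrite /block_order /=; lia.
Qed.

End BlockProducts.

(** * Digits and partial transposes *)

Section Digits.
Variable n : nat.
Hypothesis n_gt0 : (0 < n)%N.

Lemma expn_subS d k : (k < d)%N -> (n ^ (d - k) = n * n ^ (d.-1 - k))%N.
Proof. by move=> lt_kd; rewrite -expnS; congr expn; lia. Qed.

Lemma encS d (f : 'I_d.+1 -> nat) :
  enc n f = (n * enc n (fun k => f (widen_ord (leqnSn d) k)) + f ord_max)%N.
Proof.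
rewrite /enc big_ord_recr /= subnn expn0 muln1 big_distrr; congr addn.
by apply: eq_bigr => k _ /=; rewrite expn_subS // mulnCA.
Qed.

Lemma digit_lt d r k : (@digit n d r k < n)%N.
Proof. by rewrite /digit ltn_mod. Qed.

Lemma enc_lt d (f : 'I_d -> nat) : (forall k, f k < n)%N -> (enc n f < n ^ d)%N.
Proof.
elim: d f => [|d IHd] f f_lt; first by rewrite /enc big_ord0.
rewrite encS expnS.
have := IHd (fun k => f (widen_ord (leqnSn d) k)) (fun k => f_lt _).
have := f_lt ord_max; set e := enc _ _; set a := f _; set nd := (n ^ d)%N; nia.
Qed.

Lemma digitS_widen d r (k : 'I_d) :
  @digit n d.+1 r (widen_ord (leqnSn d) k) = @digit n d (r %/ n) k.
Proof. by rewrite /digit /= expn_subS // divnMA. Qed.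

Lemma digitS_max d r : @digit n d.+1 r ord_max = (r %% n)%N.
Proof. by rewrite /digit /= subnn expn0 divn1. Qed.

Lemma enc_digit d r : (r < n ^ d)%N -> enc n (@digit n d r) = r.
Proof.
elim: d r => [|d IHd] r lt_r.
  by move: lt_r; rewrite expn0 ltnS leqn0 => /eqP ->; rewrite /enc big_ord0.
rewrite encS digitS_max; under eq_fun do rewrite digitS_widen.
by rewrite IHd ?ltn_divLR // -?expnSr // mulnC -divn_eq.
Qed.

Lemma digit_enc d (f : 'I_d -> nat) : (forall k, f k < n)%N -> @digit n d (enc n f) = f.
Proof.
elim: d f => [|d IHd] f f_lt; apply: funext => k; first by case: k.
rewrite encS; have [lt_kd | le_dk] := ltnP k d.
  have -> : k = widen_ord (leqnSn d) (Ordinal lt_kd) by apply: val_inj.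
  by rewrite digitS_widen mulnC divnMDl // divn_small ?addn0 // IHd.
have -> : k = ord_max by apply: val_inj => /=; have := ltn_ord k; lia.
by rewrite digitS_max mulnC modnMDl modn_small.
Qed.

End Digits.

Definition mix d (kappa : {set 'I_d}) (a b : 'I_d -> nat) : 'I_d -> nat :=
  fun k => if k \in kappa then a k else b k.

Section PartialTranspose.
Variables (F : fieldType) (n d : nat).
Hypothesis n_gt0 : (0 < n)%N.
Local Notation MT := 'M[F]_(n ^ d).
Local Notation digit := (@digit n d).

Lemma mix_lt kappa a b : (forall k, a k < n)%N -> (forall k, b k < n)%N ->
  forall k, (@mix d kappa a b k < n)%N.
Proof. by move=> a_lt b_lt k; rewrite /mix; case: ifP. Qed.

Definition mix_ord kappa (r c : 'I_(n ^ d)) : 'I_(n ^ d) :=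
  Ordinal (enc_lt n_gt0 (mix_lt kappa (@digit_lt n n_gt0 d r) (@digit_lt n n_gt0 d c))).

Lemma digit_mix_ord kappa r c : digit (mix_ord kappa r c) = mix kappa (digit r) (digit c).
Proof. by apply: digit_enc => //; apply: mix_lt => k; apply: digit_lt. Qed.

Lemma mix_ordK kappa r c : mix_ord kappa (mix_ord kappa r c) (mix_ord kappa c r) = r.
Proof.
apply: val_inj; rewrite /= !digit_mix_ord -[RHS](enc_digit n_gt0 (ltn_ord r)).
by congr enc; apply: funext => k; rewrite /mix; case: (k \in kappa).
Qed.

Lemma ptransE kappa (M : MT) r c :
  ptrans kappa M r c = M (mix_ord kappa c r) (mix_ord kappa r c).
Proof.
rewrite mxE /Mtup /Mnat.
rewrite (insubT (fun x => x < n ^ d)%N (ltn_ord (mix_ord kappa c r))).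
rewrite (insubT (fun x => x < n ^ d)%N (ltn_ord (mix_ord kappa r c))).
by congr (M _ _); apply: val_inj.
Qed.

Lemma ptransK kappa : involutive (@ptrans F n d kappa).
Proof. by move=> M; apply/matrixP => r c; rewrite !ptransE !mix_ordK. Qed.

Lemma PTbasic_mix_prod kappa (f g : ('I_d -> nat) -> F) :
  let B : MT :=
    \matrix_(r, c) (f (mix kappa (digit c) (digit r)) * g (mix kappa (digit r) (digit c))) in
  B = 0 \/ PTbasic B.
Proof.
move=> B.
have ptB : ptrans kappa B = (\col_r f (digit r)) *m (\row_c g (digit c)).
  apply/matrixP => r c; rewrite ptransE !mxE big_ord1 !mxE !digit_mix_ord.
  by congr (f _ * g _); apply: funext => k; rewrite /mix; case: (k \in kappa).
have [rk_gt0 | ] := ltnP 0 (\rank (ptrans kappa B)).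
  by right; exists kappa; apply/eqP; rewrite eqn_leq rk_gt0 ptB mulmx_max_rank.
rewrite leqn0 mxrank_eq0 => /eqP ptB0; left.
by rewrite -[B](ptransK kappa) ptB0; apply/matrixP => r c; rewrite ptransE !mxE.
Qed.

End PartialTranspose.

Section PTsums.
Variables (F : fieldType) (n d : nat).
Local Notation MT := 'M[F]_(n ^ d).

Definition PTsum_le (M : MT) (m : nat) := exists m' (B : 'I_m' -> MT),
  [/\ (m' <= m)%N, forall i, PTbasic (B i) & M = \sum_(i < m') B i].

Lemma PTrank_le M m : PTsum_le M m -> (PTrank M <= m)%N.
Proof.
case=> m' [B [le_m' basicB eqM]].
have decM : exists B : 'I_m' -> MT, (forall i, PTbasic (B i)) /\ M = \sum_(i < m') B i.
  by exists B.
apply: leq_trans le_m'; rewrite /PTrank; set P := fun r => _.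
by have [_ ->] := @minNatP P (ex_intro _ m' decM).
Qed.

Lemma PTsum_le0 : PTsum_le 0 0.
Proof. by exists 0%N, (fun=> 0); split=> //; [case | rewrite big_ord0]. Qed.

Lemma PTsum_le1 B : B = 0 \/ PTbasic B -> PTsum_le B 1.
Proof.
case=> [-> | basicB]; last by exists 1%N, (fun=> B); split=> //; rewrite big_ord1.
by exists 0%N, (fun=> 0); split=> //; [case | rewrite big_ord0].
Qed.

Lemma PTsum_leD A B a b : PTsum_le A a -> PTsum_le B b -> PTsum_le (A + B) (a + b).
Proof.
case=> a' [BA [le_a basicA ->]] [b' [BB [le_b basicB ->]]].
exists (a' + b')%N, (fun i => match split i with inl j => BA j | inr j => BB j end).
split=> [||]; first exact: leq_add.
  by move=> i; case: (split i).
rewrite big_split_ord; congr (_ + _); apply: eq_bigr => j _.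
  by rewrite (unsplitK (inl _ j) : split (lshift _ j) = inl j).
by rewrite (unsplitK (inr _ j) : split (rshift _ j) = inr j).
Qed.

Lemma PTsum_le_sum (I : Type) (r : seq I) (P : pred I) (G : I -> MT) (c : I -> nat) :
  (forall i, List.In i r -> P i -> PTsum_le (G i) (c i)) ->
  PTsum_le (\sum_(i <- r | P i) G i) (\sum_(i <- r | P i) c i)%N.
Proof.
elim: r => [|i r IHr] leG; first by rewrite !big_nil; exact: PTsum_le0.
have leG_r : PTsum_le (\sum_(j <- r | P j) G j) (\sum_(j <- r | P j) c j)%N.
  by apply: IHr => j rj; apply: leG; right.
rewrite !big_cons; case: ifP => // Pi; apply: PTsum_leD leG_r.
by apply: leG; first left.
Qed.

Lemma PTsum_le_card (I : finType) (A : {pred I}) (G : I -> MT) :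
  (forall i, i \in A -> G i = 0 \/ PTbasic (G i)) -> PTsum_le (\sum_(i in A) G i) #|A|.
Proof.
by move=> basicG; rewrite -sum1_card; apply: PTsum_le_sum => i _ /basicG /PTsum_le1.
Qed.

End PTsums.

(** * PT-rank of a block product fed with ShiftedTensor inputs *)

Section ShiftedTensorDecomposition.
Variables (F : fieldType) (n' d : nat).
Local Notation n := n'.+1.
Local Notation digit := (@digit n d).

Lemma pair_ord_subproof (a b : nat) : ((a %% n) * n + b %% n < n ^ 2)%N.
Proof. have := ltn_pmod a (ltn0Sn n'); have := ltn_pmod b (ltn0Sn n'); nia. Qed.

Definition pair_ord (a b : nat) : 'I_(n ^ 2) := Ordinal (pair_ord_subproof a b).

Lemma pfst_pair_ord a b : pfst n (pair_ord a b) = (a %% n)%N.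
Proof. by rewrite /pfst /= divnMDl // divn_small ?ltn_pmod ?addn0. Qed.

Lemma psnd_pair_ord a b : psnd n (pair_ord a b) = (b %% n)%N.
Proof. by rewrite /psnd /= modnMDl modn_mod. Qed.

Definition ext (f : 'I_d -> nat) (t : nat) : nat := oapp f 0%N (insub t : option 'I_d).

Lemma ext_ord f (k : 'I_d) : ext f k = f k.
Proof. by rewrite /ext valK. Qed.

Lemma ext_out f t : (d <= t)%N -> ext f t = 0%N.
Proof. by move=> le_dt; rewrite /ext insubF // ltnNge le_dt. Qed.

(* Position t carries the pair <j_(t-1), i_t>, with j_(-1) = i_d = 0. *)
Definition st_input (i j : 'I_d -> nat) : seq 'I_(n ^ 2) :=
  [seq pair_ord (if t is t'.+1 then ext j t' else 0%N) (ext i t) | t <- iota 0 d.+1].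

Lemma size_st_input i j : size (st_input i j) = d.+1.
Proof. by rewrite size_map size_iota. Qed.

Lemma nth_st_input x0 i j t : (t <= d)%N ->
  nth x0 (st_input i j) t = pair_ord (if t is t'.+1 then ext j t' else 0%N) (ext i t).
Proof. by move=> le_td; rewrite (nth_map 0%N) ?size_iota // nth_iota. Qed.

Lemma ShiftedTensor_st_input (M : 'M[F]_(n ^ d)) (r c : 'I_(n ^ d)) :
  ShiftedTensor M (st_input (digit r) (digit c)) = M r c.
Proof.
have digit_lt_n (a : nat) k : (digit a k < n)%N by apply: digit_lt.
rewrite /ShiftedTensor; set x := map _ (st_input _ _).
have nthE t : (t <= d)%N -> nth 0%N x t =
    pair_ord (if t is t'.+1 then ext (digit c) t' else 0%N) (ext (digit r) t).
  by move=> le_td; rewrite (nth_map (pair_ord 0 0)) ?size_st_input // nth_st_input.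
rewrite nthE // nthE // pfst_pair_ord psnd_pair_ord ext_out //.
rewrite !mod0n !eqxx /Mtup.
have -> : (fun k : 'I_d => psnd n (nth 0%N x k)) = digit r.
  by apply: funext => k; rewrite nthE 1?ltnW // psnd_pair_ord ext_ord modn_small.
have -> : (fun k : 'I_d => pfst n (nth 0%N x k.+1)) = digit c.
  by apply: funext => k; rewrite nthE // pfst_pair_ord ext_ord modn_small.
by rewrite /Mnat !enc_digit // !valK.
Qed.

Section BlockProductMatrix.
Variable p : seq (nat * tensor F (n ^ 2)).
Hypotheses (order_p : block_order p = d.+1) (pos_p : pos_blocks p).

Definition colour t := nth false (colouring false p) t.
Definition kappa : {set 'I_d} := [set k : 'I_d | colour k].
Definition cut (k : 'I_d) := colour k != colour k.+1.

Definition cut_free : pred {ffun 'I_d -> 'I_n} :=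
  family (fun k => [pred a : 'I_n | cut k ==> (a == ord0)]).

Definition subst (v : {ffun 'I_d -> 'I_n}) (j : 'I_d -> nat) : 'I_d -> nat :=
  fun k => if cut k then j k else v k.

Definition agree (P : pred 'I_d) (v : {ffun 'I_d -> 'I_n}) (j : 'I_d -> nat) : F :=
  \prod_(k | ~~ cut k && P k) (j k == v k)%:R.

Lemma block_prod_subst (i j : 'I_d -> nat) : (forall k, j k < n)%N ->
  block_prod p (st_input i j) =
  \sum_(v in cut_free) agree predT v j * block_prod p (st_input i (subst v j)).
Proof.
move=> j_lt.
pose v0 : {ffun 'I_d -> 'I_n} := [ffun k => if cut k then ord0 else inord (j k)].
have v0_free : v0 \in cut_free.
  by apply/familyP => k; rewrite !inE ffunE; case: (cut k).
have subst_v0 : subst v0 j = j.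
  by apply: funext => k; rewrite /subst ffunE; case: (cut k); rewrite //= inordK.
have agree_v0 : agree predT v0 j = 1.
  by apply: big1 => k /andP[/negbTE ncut _]; rewrite ffunE ncut inordK ?eqxx.
rewrite (bigD1 v0) //= agree_v0 subst_v0 mul1r big1 ?addr0 // => v /andP[v_free neq_v].
have [k ncut neq_jv] : exists2 k, ~~ cut k & j k != v k.
  apply/exists_inP; apply: contraNT neq_v => /exists_inPn eq_jv; apply/eqP/ffunP => k.
  rewrite ffunE; case: ifP => [ck | /negbT/eq_jv/negPn/eqP eq_jvk].
    by move/familyP: v_free => /(_ k); rewrite inE ck => /eqP.
  by apply: val_inj; rewrite /= inordK // eq_jvk.
by rewrite /agree (bigD1 k) ?ncut //= (negbTE neq_jv) !mul0r.
Qed.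

Lemma nth_st_input_colour c v (i j : 'I_d -> nat) x0 t :
  let w := if c then mix kappa i j else mix kappa j i in
  (t <= d)%N -> colour t = c ->
  nth x0 (st_input i (subst v j)) t = nth x0 (st_input w (subst v w)) t.
Proof.
move=> w le_td ct; rewrite !nth_st_input //; congr pair_ord.
  case: t le_td ct => [//|t] lt_td ct; rewrite !(ext_ord _ (Ordinal lt_td)) /subst /cut /=.
  case: ifP => //; rewrite ct /w /mix /kappa.
  by case: c {ct w} => /=; rewrite inE /=; case: (colour t).
have [lt_td | ] := ltnP t d; last by move=> le_dt; rewrite !ext_out.
rewrite !(ext_ord _ (Ordinal lt_td)) /w /mix /kappa.
by case: c {w} ct => /=; rewrite inE /= => ->.
Qed.

(* [(k \in kappa) != c] selects the k at which the argument of the colour-c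
   factor below holds j_k. *)
Definition colour_factor c (v : {ffun 'I_d -> 'I_n}) (y : 'I_d -> nat) : F :=
  agree (fun k => (k \in kappa) != c) v y * colour_prod c false p (st_input y (subst v y)).

Lemma block_prod_subst_split v (i j : 'I_d -> nat) :
  agree predT v j * block_prod p (st_input i (subst v j)) =
  colour_factor false v (mix kappa j i) * colour_factor true v (mix kappa i j).
Proof.
pose w c := if c then mix kappa i j else mix kappa j i.
have agreeE c : agree (fun k => (k \in kappa) != c) v j =
                 agree (fun k => (k \in kappa) != c) v (w c).
  by apply: eq_bigr => k /andP[_]; rewrite /w /mix; case: c; case: (k \in kappa).
have colourE c : colour_prod c false p (st_input i (subst v j)) =
    colour_prod c false p (st_input (w c) (subst v (w c))).
  apply: (colour_prod_local (x0 := pair_ord 0 0)); rewrite ?size_st_input ?order_p //.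
  by move=> t lt_t ct; apply: nth_st_input_colour.
have agree_split : agree predT v j =
    agree (fun k => (k \in kappa) != false) v j * agree (fun k => (k \in kappa) != true) v j.
  rewrite /agree (bigID (fun k => k \in kappa)) /=.
  by congr (_ * _); apply: eq_bigl => k; case: (k \in kappa); rewrite ?andbT ?andbF.
rewrite agree_split (block_prod_colour false) !agreeE !colourE /colour_factor /w /=; ring.
Qed.

Lemma card_cut_free : #|cut_free| = (n ^ (d.+1 - size p))%N.
Proof.
have card_noncut : #|[pred k : 'I_d | ~~ cut k]| = (d.+1 - size p)%N.
  rewrite -order_p -(adj_eq_colouring false pos_p) adj_eq_sum size_colouring order_p.
  rewrite -sum1_card big_mkcond /=; apply: eq_bigr => k _.
  by rewrite inE /cut /colour negbK; case: eqP.
rewrite card_family foldrE big_map big_enum /= -card_noncut -prod_nat_const [RHS]big_mkcond /=.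
apply: eq_bigr => k _; rewrite inE; case: (cut k) => /=.
  by rewrite (eq_card (B := pred1 ord0)) ?card1 // => a; rewrite !inE.
by rewrite (eq_card (B := predT)) ?card_ord // => a; rewrite !inE.
Qed.

Definition block_prod_mx : 'M[F]_(n ^ d) :=
  \matrix_(r, c) block_prod p (st_input (digit r) (digit c)).

Lemma PTsum_le_block_prod_mx : PTsum_le block_prod_mx (n ^ (d.+1 - size p)).
Proof.
rewrite -card_cut_free.
have -> : block_prod_mx = \sum_(v in cut_free)
    \matrix_(r, c) (colour_factor false v (mix kappa (digit c) (digit r)) *
                    colour_factor true v (mix kappa (digit r) (digit c))).
  apply/matrixP => r c; rewrite summxE !mxE block_prod_subst => [|k]; last exact: digit_lt.
  by apply: eq_bigr => v _; rewrite mxE block_prod_subst_split.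
by apply: PTsum_le_card => v _; apply: PTbasic_mix_prod.
Qed.

End BlockProductMatrix.

Lemma PTsum_le_expansion (M : 'M[F]_(n ^ d)) s P :
  expansion d.+1 (ShiftedTensor M) s P ->
  PTsum_le M (\sum_(q <- P) n ^ (d.+1 - size q))%N.
Proof.
case=> _ admP eqM.
have -> : M = \sum_(q <- P) block_prod_mx q.
  apply/matrixP => r c; rewrite summxE -ShiftedTensor_st_input eqM ?size_st_input //.
  by apply: eq_bigr => q _; rewrite mxE.
apply: PTsum_le_sum => q Pq _; have [ord_q pos_q _] := admP q Pq.
exact: PTsum_le_block_prod_mx.
Qed.

End ShiftedTensorDecomposition.

Lemma ler_sum_const_In (R : numDomainType) (I : Type) (r : seq I) (f : I -> R) (a : R) :
  (forall i, List.In i r -> f i <= a) -> \sum_(i <- r) f i <= (size r)%:R * a.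
Proof.
elim: r => [|i r IHr] le_fa; first by rewrite big_nil mul0r.
rewrite big_cons /= -addn1 natrD mulrDl mul1r addrC lerD //.
  by apply: IHr => j rj; apply: le_fa; right.
by apply: le_fa; left.
Qed.

Lemma expn_le_powR_log2 (R : realType) (n d r : nat) : (0 < n)%N -> (0 < d)%N ->
  (d < 2 ^ r)%N -> (r <= d.+1)%N ->
  ((n ^ (d.+1 - r))%:R : R) <= n%:R `^ (d%:R - log2 (d%:R : R) + 1).
Proof.
move=> n_gt0 d_gt0 lt_d2r le_rd.
rewrite natrX -powR_mulrn ?ler0n //; apply: ler_powR; first by rewrite ler1n.
have log2_le : log2 (d%:R : R) <= r%:R.
  have ln2_gt0 : (0 : R) < ln 2 by apply: ln_gt0; rewrite ltr1n.
  rewrite /log2 ler_pdivrMr // mulr_natl -lnXn ?ltr0n // -natrX.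
  by rewrite ler_ln ?posrE ?ltr0n ?expn_gt0 // ler_nat ltnW.
rewrite natrB // -addn1 natrD; lra.
Qed.

Theorem theorem4p2 (R : realType) (F : fieldType) (n d : nat)
  (M : 'M[F]_(n ^ d)) :
  (1 <= n)%N -> (1 <= d)%N ->
  ((PTrank M)%:R / (n%:R `^ (d%:R - log2 (d%:R : R) + 1))
     <= (Lncsm d.+1 (ShiftedTensor M))%:R :> R).
Proof.
case: n M => [//|n'] M _ d_gt0.
set L := Lncsm _ _; set Q := _ `^ _.
have [SMle_L _] := minNatP (SMle_exists (ShiftedTensor M) (ltn0Sn d)).
have [P expP] := SMle_expansion SMle_L; have [szP admP _] := expP.
have le_rank := PTrank_le (PTsum_le_expansion expP).
rewrite ler_pdivrMr ?powR_gt0 ?ltr0n //.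
apply: le_trans (_ : (\sum_(q <- P) n'.+1 ^ (d.+1 - size q))%N%:R <= _).
  by rewrite ler_nat.
rewrite natr_sum; apply: le_trans (ler_sum_const_In (a := Q) _) _.
  move=> q Pq; have [ord_q pos_q le_d] := admP q Pq.
  by apply: expn_le_powR_log2; rewrite // -ord_q size_le_block_order.
by rewrite ler_wpM2r ?ler_nat // ltW ?powR_gt0 ?ltr0n.
Qed.
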